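(* Let $\mathcal{H}$ be a complex Hilbert space and let $K$ be the convex set of density operators on $\mathcal{H}$. Then for any projection operators $E,F$ that are extreme points of $K$ (i.e. rank-one projections), the affine ratio satisfies $\langle E,F\rangle_K=\mathrm{Tr}(EF)$.
   Context: For a convex set $K$, let $A(K)$ be the set of affine functions $K\to\mathbb{R}$. For extreme points $x,y$ of $K$, the affine ratio (transition probability) is $\langle x,y\rangle_K=\inf\{f(y): f\in A(K),\ \mathrm{range}(f)\subseteq[0,1],\ f(x)=1\}$. *)

From mathcomp Require Import all_boot all_order all_algebra.
From mathcomp Require Import complex.
From mathcomp Require Import reals.
Set Implicit Arguments. Unset Strict Implicit. Unset Printing Implicit Defensive.
Import Order.TTheory GRing.Theory Num.Theory.
Local Open Scope ring_scope.
Local Open Scope complex_scope.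

Section Hilbert.
Variables (R : realType) (V : lmodType R[i]) (ip : V -> V -> R[i]).

Definition hnorm (x : V) : R := Num.sqrt (complex.Re (ip x x)).

Definition is_hilbert : Prop :=
  [/\ (forall (a : R[i]) (x y z : V), ip (a *: x + y) z = a * ip x z + ip y z),
      (forall x y : V, ip y x = (ip x y)^*),
      (forall x : V, 0 <= ip x x),
      (forall x : V, ip x x = 0 -> x = 0) &
      (forall u : nat -> V,
         (forall e : R, 0 < e -> exists N : nat, forall m n : nat,
             (N <= m)%N -> (N <= n)%N -> hnorm (u m - u n) < e) ->
         exists l : V, forall e : R, 0 < e -> exists N : nat, forall n : nat,
             (N <= n)%N -> hnorm (u n - l) < e)].

Definition is_linear (T : V -> V) : Prop :=
  forall (a : R[i]) (x y : V), T (a *: x + y) = a *: T x + T y.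

Definition is_bounded (T : V -> V) : Prop :=
  exists M : R, forall x : V, hnorm (T x) <= M * hnorm x.

Definition is_positive (T : V -> V) : Prop :=
  forall x : V, 0 <= ip (T x) x.

Definition is_projection (E : V -> V) : Prop :=
  (forall v : V, E (E v) = E v) /\ (forall u v : V, ip (E u) v = ip u (E v)).

Definition orthonormal_basis (B : V -> Prop) : Prop :=
  [/\ (forall b, B b -> ip b b = 1),
      (forall b c, B b -> B c -> b <> c -> ip b c = 0) &
      (forall x, (forall b, B b -> ip x b = 0) -> x = 0)].

(* unordered summation over the (possibly infinite) family B:
   the net of finite partial sums converges to c *)
Definition has_sum (B : V -> Prop) (g : V -> R[i]) (c : R[i]) : Prop :=
  forall e : R, 0 < e -> exists S0 : seq V, (forall b, b \in S0 -> B b) /\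
    forall S : seq V, uniq S -> (forall b, b \in S -> B b) ->
      {subset S0 <= S} -> `|\sum_(b <- S) g b - c| < e%:C.

Definition has_trace (T : V -> V) (c : R[i]) : Prop :=
  forall B : V -> Prop, orthonormal_basis B -> has_sum B (fun b => ip (T b) b) c.

Definition density : (V -> V) -> Prop :=
  fun rho => [/\ is_linear rho, is_bounded rho, is_positive rho & has_trace rho 1].

End Hilbert.

Section Convex.
Variables (R : realType) (V : lmodType R[i]).

Definition cvx (t : R) (x y : V -> V) : V -> V :=
  fun v => t%:C *: x v + (1 - t)%:C *: y v.

Definition affine_on (K : (V -> V) -> Prop) (f : (V -> V) -> R) : Prop :=
  forall x y (t : R), K x -> K y -> 0 <= t <= 1 ->
    f (cvx t x y) = t * f x + (1 - t) * f y.

Definition extreme_point (K : (V -> V) -> Prop) (x : V -> V) : Prop :=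
  K x /\ forall y z (t : R), K y -> K z -> 0 < t < 1 -> x = cvx t y z ->
    y = x /\ z = x.

Definition affine_ratio (K : (V -> V) -> Prop) (x y : V -> V) : R :=
  inf (fun r : R => exists f : (V -> V) -> R,
         [/\ affine_on K f, (forall z, K z -> 0 <= f z <= 1), f x = 1 & r = f y]).

End Convex.

From mathcomp Require Import all_boot all_order all_algebra.
From mathcomp Require Import complex reals.
From mathcomp Require Import boolp classical_sets.
From mathcomp Require Import ring lra.
Set Implicit Arguments. Unset Strict Implicit. Unset Printing Implicit Defensive.
Import Order.TTheory GRing.Theory Num.Theory.
Local Open Scope ring_scope.
Local Open Scope complex_scope.
Local Open Scope classical_set_scope.

(* Num.Theory exports a different Re, defined for closed number fields. *)
Local Notation Re := complex.Re.

(* A projection of trace one is rank1 e for a unit vector e, and for unit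
   vectors e, f the trace of rank1 e \o rank1 f is q = |<e, f>|^2.  The
   functional rho |-> Re <rho e, e> is affine, takes values in [0, 1] on
   density operators and is 1 at rank1 e, so the affine ratio is at most q.
   Conversely, write f = a e + w with w orthogonal to e.  For lam > 0 and
   v = e - lam a^* w one has
     lam rank1 f + rank1 v = (lam q + 1) rank1 e + (lam^2 q + lam) rank1 w,
   so a mixture of the states of f and v is also a mixture of the states of
   e and w; an affine g with values in [0, 1] and g (rank1 e) = 1 therefore
   satisfies g (rank1 f) >= q - lam q (1 - q), and lam -> 0 gives the bound. *)

Section RealPart.
Variable R : rcfType.
Implicit Types (r : R) (z w : R[i]).

Lemma ReD z w : Re (z + w) = Re z + Re w. Proof. by case: z; case: w. Qed.

Lemma ReB z w : Re (z - w) = Re z - Re w. Proof. by case: z; case: w. Qed.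

Lemma Re_sum (I : Type) (s : seq I) (F : I -> R[i]) :
  Re (\sum_(i <- s) F i) = \sum_(i <- s) Re (F i).
Proof. exact: (big_morph _ ReD). Qed.

Lemma Re_realMl r z : Re (r%:C * z) = r * Re z.
Proof. by case: z => a b /=; rewrite mul0r subr0. Qed.

Lemma conj_realC r : Num.conj r%:C = r%:C.
Proof. by rewrite conj_Creal // complex_real. Qed.

Lemma ger0_ReE z : 0 <= z -> (Re z)%:C = z.
Proof. by move/ger0_real/RRe_real. Qed.

Lemma mulJ_ReE z : (Re (z * Num.conj z))%:C = z * Num.conj z.
Proof. exact/ger0_ReE/mul_conjC_ge0. Qed.

End RealPart.

Lemma sub_sum_ler (R : numDomainType) (T : eqType) (s s' : seq T) (F : T -> R) :
  uniq s -> uniq s' -> {subset s <= s'} -> (forall x, x \in s' -> 0 <= F x) ->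
  \sum_(x <- s) F x <= \sum_(x <- s') F x.
Proof.
move=> us us' ss' F0; rewrite [leRHS](bigID (mem s)) /=.
have -> : \sum_(x <- s' | x \in s) F x = \sum_(x <- s) F x.
  rewrite -big_filter; apply/perm_big/uniq_perm; rewrite ?filter_uniq //.
  by move=> x; rewrite mem_filter andb_idr // => /ss'.
by rewrite lerDl big_seq_cond sumr_ge0 // => x /andP[/F0].
Qed.

Lemma bigcup_chain_pair (T : Type) (F : set (set T)) (A : set T) (b c : T) :
  total_on F subset ->
  (\bigcup_(X in F) X `|` A) b -> (\bigcup_(X in F) X `|` A) c ->
  (A b /\ A c) \/ exists2 X, F X & (X `|` A) b /\ (X `|` A) c.
Proof.
move=> Ftot [[X FX Xb]|Ab] [[Y FY Yc]|Ac]; last by left.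
- have [XY|YX] := Ftot X Y FX FY; right; [exists Y|exists X] => //.
    by split; left; [apply: XY|].
  by split; left; [|apply: YX].
- by right; exists X => //; split; [left|right].
- by right; exists Y => //; split; [right|left].
Qed.

Section FamilySums.
Variables (R : realType) (V : lmodType R[i]) (B : V -> Prop).
Implicit Types (g : V -> R[i]) (c : R[i]).

Lemma eq_has_sum g g' c : g =1 g' -> has_sum B g c -> has_sum B g' c.
Proof. by move=> /funext <-. Qed.

Lemma has_sumD g1 g2 c1 c2 :
  has_sum B g1 c1 -> has_sum B g2 c2 -> has_sum B (fun b => g1 b + g2 b) (c1 + c2).
Proof.
move=> h1 h2 e e0; have e20 : 0 < e / 2 by rewrite divr_gt0.
have [S1 [S1B H1]] := h1 _ e20; have [S2 [S2B H2]] := h2 _ e20.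
exists (S1 ++ S2); split=> [b|S uS SB SS]; first by rewrite mem_cat => /orP[/S1B|/S2B].
have k1 := H1 S uS SB; have k2 := H2 S uS SB.
rewrite big_split /= opprD addrACA.
rewrite (le_lt_trans (ler_normD _ _)) // (splitr e) rmorphD ltrD //.
  by apply: k1 => b bS1; apply: SS; rewrite mem_cat bS1.
by apply: k2 => b bS2; apply: SS; rewrite mem_cat bS2 orbT.
Qed.

Lemma has_sumZ k g c : has_sum B g c -> has_sum B (fun b => k * g b) (k * c).
Proof.
move=> h e e0; set r := Re `|k|.
have kr : `|k| = r%:C by rewrite ger0_ReE.
have r0 : 0 <= r by rewrite -lecR -kr normr_ge0.
have [S0 [S0B H]] := h (e / (r + 1)) (divr_gt0 e0 (ltr_wpDl r0 ltr01)).
exists S0; split=> [//|S uS SB SS].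
rewrite -mulr_sumr -mulrBr normrM kr.
apply: (le_lt_trans (ler_wpM2l _ (ltW (H S uS SB SS)))); first by rewrite lecR.
rewrite -rmorphM ltcR mulrCA gtr_pMr // ltr_pdivrMr ?mul1r; lra.
Qed.

Lemma partial_sum_le_has_sum g c : (forall b, B b -> 0 <= g b) -> has_sum B g c ->
  forall S, uniq S -> (forall b, b \in S -> B b) -> Re (\sum_(b <- S) g b) <= Re c.
Proof.
move=> g0 hs T uT TB; rewrite leNgt; apply/negP; rewrite -subr_gt0 => hd.
have [S0 [S0B /(_ (undup (T ++ S0)) (undup_uniq _))]] := hs _ hd.
set S := undup (T ++ S0).
have SB b : b \in S -> B b by rewrite mem_undup mem_cat => /orP[/TB|/S0B].
have S0S : {subset S0 <= S} by move=> b bS0; rewrite mem_undup mem_cat bS0 orbT.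
move=> /(_ SB S0S) /(le_lt_trans (normc_ge_Re _)); rewrite ltcR ReB => hS.
have : Re (\sum_(b <- T) g b) <= Re (\sum_(b <- S) g b).
  rewrite !Re_sum; apply: sub_sum_ler; rewrite ?undup_uniq //.
    by move=> b bT; rewrite mem_undup mem_cat bT.
  by move=> b /SB /g0; rewrite lecE => /andP[].
have := ler_norm (Re (\sum_(b <- S) g b) - Re c); lra.
Qed.

Lemma has_sum0 c : has_sum B (fun=> 0) c -> c = 0.
Proof.
move=> hs; apply/eqP; apply: contraT => c0.
have cpos : 0 < Re `|c| by rewrite -ltcR ger0_ReE // normr_gt0.
have [S0 [S0B /(_ (undup S0) (undup_uniq _))]] := hs _ cpos.
rewrite big1 // sub0r normrN ger0_ReE // ltxx; apply.
  by move=> b; rewrite mem_undup => /S0B.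
by move=> b; rewrite mem_undup.
Qed.

End FamilySums.

Section AffineMixture.
Variables (R : realType) (V : lmodType R[i]) (K : (V -> V) -> Prop) (g : (V -> V) -> R).
Hypotheses (g_affine : affine_on K g) (g_range : forall x, K x -> 0 <= g x <= 1).

Lemma affine_cvx_le a b c d (t x : R) : K a -> K b -> K c -> K d ->
  0 <= t <= 1 -> 0 <= x <= 1 -> g c = 1 -> cvx t a b = cvx x c d ->
  x - (1 - t) <= t * g a.
Proof.
move=> Ka Kb Kc Kd t01 x01 gc1 abcd.
have := g_affine Kc Kd x01; rewrite -abcd g_affine // gc1 mulr1.
have /andP[gb0 gb1] := g_range Kb; have /andP[gd0 gd1] := g_range Kd.
have : (1 - t) * g b <= 1 - t by rewrite ler_piMr // subr_ge0; case/andP: t01.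
have : 0 <= (1 - x) * g d by rewrite mulr_ge0 // subr_ge0; case/andP: x01.
lra.
Qed.

Lemma affine_mixture_le a b c d (ta tb tc td : R) : K a -> K b -> K c -> K d ->
  g c = 1 -> 0 < ta -> 0 <= tb -> 0 <= tc -> 0 <= td -> ta + tb = tc + td ->
  (forall u, ta%:C *: a u + tb%:C *: b u = tc%:C *: c u + td%:C *: d u) ->
  tc - tb <= ta * g a.
Proof.
move=> Ka Kb Kc Kd gc1 ta0 tb0 tc0 td0 tsum mix.
have s0 : 0 < ta + tb by rewrite ltr_wpDr.
have sK y z : y + z = ta + tb -> 1 - y / (ta + tb) = z / (ta + tb).
  by move=> yz; rewrite -[1](mulfV (lt0r_neq0 s0)) -mulrBl -yz [y + z - y]addrC addKr.
have unit01 y z : 0 <= y -> 0 <= z -> y + z = ta + tb -> 0 <= y / (ta + tb) <= 1.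
  by move=> y0 z0 yz; rewrite ler_pdivrMr // mul1r -yz lerDl z0 andbT divr_ge0 ?addr_ge0.
have := affine_cvx_le Ka Kb Kc Kd (unit01 _ _ (ltW ta0) tb0 erefl)
  (unit01 _ _ tc0 td0 (esym tsum)) gc1.
rewrite (sK _ _ erefl) mulrAC -mulrBl ler_pM2r ?invr_gt0 //.
apply; apply: funext => u; rewrite /cvx (sK _ _ erefl) (sK _ _ (esym tsum)).
by rewrite !rmorphM /= !(mulrC _ (ta + tb)^-1%:C) -!scalerA -!scalerDr mix.
Qed.

End AffineMixture.

Section InnerProductSpace.
Variables (R : realType) (V : lmodType R[i]) (ip : V -> V -> R[i]).
Hypothesis HV : is_hilbert ip.
Implicit Types (x y z u v : V) (a : R[i]).

Lemma ipC x y : ip y x = Num.conj (ip x y).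
Proof. by case: HV => _ h _ _ _; apply: h. Qed.

Lemma ip_ge0 x : 0 <= ip x x.
Proof. by case: HV => _ _ h _ _; apply: h. Qed.

Lemma ipDl x y z : ip (x + y) z = ip x z + ip y z.
Proof. by case: HV => h _ _ _ _; rewrite -{1}[x]scale1r h mul1r. Qed.

Lemma ip0l z : ip 0 z = 0.
Proof. by apply/(addrI (ip 0 z)); rewrite -ipDl !addr0. Qed.

Lemma ipZl a x z : ip (a *: x) z = a * ip x z.
Proof. by case: HV => h _ _ _ _; rewrite -[a *: x]addr0 h ip0l addr0. Qed.

Lemma ipNl x z : ip (- x) z = - ip x z.
Proof. by rewrite -scaleN1r ipZl mulN1r. Qed.

Lemma ipBl x y z : ip (x - y) z = ip x z - ip y z.
Proof. by rewrite ipDl ipNl. Qed.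

Lemma ipDr x y z : ip x (y + z) = ip x y + ip x z.
Proof. by rewrite ipC ipDl rmorphD /= -!ipC. Qed.

Lemma ipZr a x y : ip x (a *: y) = Num.conj a * ip x y.
Proof. by rewrite ipC ipZl rmorphM /= -ipC. Qed.

Lemma ip0r z : ip z 0 = 0.
Proof. by rewrite ipC ip0l rmorph0. Qed.

Lemma ipBr x y z : ip z (x - y) = ip z x - ip z y.
Proof. by rewrite -scaleN1r ipDr ipZr rmorphN1 mulN1r. Qed.

Lemma ip_suml (I : Type) (s : seq I) (F : I -> V) z :
  ip (\sum_(i <- s) F i) z = \sum_(i <- s) ip (F i) z.
Proof. exact: (big_morph (ip^~ z) (fun x y => ipDl x y z) (ip0l z)). Qed.

Lemma ip_sumr (I : Type) (s : seq I) (F : I -> V) z :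
  ip z (\sum_(i <- s) F i) = \sum_(i <- s) ip z (F i).
Proof. exact: (big_morph (ip z) (ipDr z) (ip0r z)). Qed.

Definition sqnorm x : R := Re (ip x x).

Lemma ip_sqnorm x : ip x x = (sqnorm x)%:C.
Proof. by rewrite ger0_ReE // ip_ge0. Qed.

Lemma sqnorm_ge0 x : 0 <= sqnorm x.
Proof. by rewrite -lecR -ip_sqnorm ip_ge0. Qed.

Lemma sqnorm_eq0 x : (sqnorm x == 0) = (x == 0).
Proof.
apply/eqP/eqP=> [|->]; last by rewrite /sqnorm ip0r.
by case: HV => _ _ _ h _ x0; apply: h; rewrite ip_sqnorm x0.
Qed.

Lemma sqnorm_gt0 x : (0 < sqnorm x) = (x != 0).
Proof. by rewrite lt_def sqnorm_ge0 andbT sqnorm_eq0. Qed.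

Lemma cauchy_schwarz x y : Re (ip x y * ip y x) <= sqnorm x * sqnorm y.
Proof.
have [->|y0] := eqVneq y 0; first by rewrite ip0r mul0r /sqnorm ip0r mulr0.
have Ny0 : 0 < sqnorm y by rewrite sqnorm_gt0.
pose z := (sqnorm y)%:C *: x - ip x y *: y.
have Nz : sqnorm z = sqnorm y ^+ 2 * sqnorm x - sqnorm y * Re (ip x y * ip y x).
  rewrite /sqnorm [ip z z](_ : _ = (sqnorm y ^+ 2 * sqnorm x)%:C -
                                 (sqnorm y)%:C * (ip x y * ip y x)) ?ReB ?Re_realMl //.
  rewrite /z !ipBl !ipBr !ipZl !ipZr !ip_sqnorm conj_realC -(ipC x y).
  by rewrite rmorphM rmorphXn /=; ring.
by have := sqnorm_ge0 z; rewrite Nz subr_ge0 expr2 -mulrA ler_pM2l // [sqnorm x * _]mulrC.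
Qed.

Definition orthonormal (A : set V) :=
  forall b c, A b -> A c -> ip b c = (b == c)%:R.

Lemma sub_orthonormal (A B : set V) : A `<=` B -> orthonormal B -> orthonormal A.
Proof. by move=> AB oB b c /AB Bb /AB Bc; apply: oB. Qed.

Lemma onb_orthonormal B : orthonormal_basis ip B -> orthonormal B.
Proof.
case=> B1 B2 _ b c Bb Bc; have [<-|bc] := eqVneq b c; first exact: B1.
exact/B2/eqP.
Qed.

Lemma exists_unit_multiple x : x != 0 -> exists a, ip (a *: x) (a *: x) = 1.
Proof.
rewrite -sqnorm_gt0 => Nx; exists ((Num.sqrt (sqnorm x))^-1)%:C.
rewrite ipZl ipZr conj_realC ip_sqnorm -!rmorphM /= mulrA -expr2 exprVn.
by rewrite sqr_sqrtr ?mulVf ?ltW ?gt_eqF.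
Qed.

Lemma orthonormal_setU1 A y : orthonormal A -> ip y y = 1 ->
  (forall b, A b -> ip y b = 0) -> orthonormal (A `|` [set y]).
Proof.
move=> oA yy yA.
have neq_y b : A b -> (b == y) = false.
  by move=> Ab; apply/eqP => by_; move: (yA b Ab); rewrite by_ yy => /eqP; rewrite oner_eq0.
move=> b c [Ab|->] [Ac|->]; [exact: oA | | | by rewrite eqxx].
- by rewrite neq_y // ipC yA // rmorph0.
- by rewrite eq_sym neq_y // yA.
Qed.

Lemma orthonormal_extend A : orthonormal A -> exists2 B, orthonormal_basis ip B & A `<=` B.
Proof.
move=> oA; pose P (X : set V) := orthonormal (X `|` A).
have chainP (F : set (set V)) : F `<=` P -> total_on F subset -> P (\bigcup_(X in F) X).
  move=> FP Ftot b c bU cU.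
  have [[Ab Ac]|[X /FP oX [bX cX]]] := bigcup_chain_pair Ftot bU cU.
    exact: oA.
  exact: oX.
have [M [oM Mmax]] := Zorn_bigcup chainP.
exists (M `|` A); last by move=> b Ab; right.
split=> [b Mb|b c Mb Mc /eqP bc|x xM]; first by rewrite oM ?eqxx.
  by rewrite oM // (negbTE bc).
have [//|/exists_unit_multiple[a aa]] := eqVneq x 0; exfalso.
have yM b : (M `|` A) b -> ip (a *: x) b = 0 by move=> Mb; rewrite ipZl xM ?mulr0.
apply: (Mmax (M `|` [set a *: x])).
  split=> [|/(_ (a *: x) (or_intror erefl)) Ma]; first exact: subsetUl.
  by move: (yM _ (or_introl Ma)); rewrite aa => /eqP; rewrite oner_eq0.
by rewrite /P setUAC; apply: orthonormal_setU1.
Qed.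

Definition proj_seq (S : seq V) x := \sum_(b <- S) ip x b *: b.

Lemma sum_ip_orthonormal S (G : V -> R[i]) b : uniq S -> orthonormal [set` S] ->
  b \in S -> \sum_(c <- S) ip b c * G c = G b.
Proof.
move=> uS oS bS; rewrite (bigD1_seq b) //= oS ?eqxx ?mul1r //.
rewrite big_seq_cond big1 ?addr0 // => c /andP[cS cb].
by rewrite oS // eq_sym (negbTE cb) mul0r.
Qed.

Lemma ip_proj_seql S x y : ip (proj_seq S x) y = \sum_(b <- S) ip x b * ip b y.
Proof. by rewrite ip_suml; apply: eq_bigr => b _; rewrite ipZl. Qed.

Lemma ip_proj_seqr S x y : ip x (proj_seq S y) = \sum_(b <- S) ip x b * ip b y.
Proof. by rewrite ip_sumr; apply: eq_bigr => b _; rewrite ipZr -ipC mulrC. Qed.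

Lemma ip_residual S x y : uniq S -> orthonormal [set` S] ->
  ip (x - proj_seq S x) (y - proj_seq S y) = ip x y - \sum_(b <- S) ip x b * ip b y.
Proof.
move=> uS oS; have PP : ip (proj_seq S x) (proj_seq S y) = \sum_(b <- S) ip x b * ip b y.
  rewrite ip_proj_seql big_seq [RHS]big_seq; apply: eq_bigr => b bS.
  by rewrite ip_proj_seqr sum_ip_orthonormal.
rewrite !ipBl !ipBr PP ip_proj_seql ip_proj_seqr; ring.
Qed.

Definition parseval v := forall B, orthonormal_basis ip B ->
  has_sum B (fun b => ip b v * ip v b) (ip v v).

Lemma sqnorm_residual_lt S x (e : R) : uniq S -> orthonormal [set` S] ->
  `|\sum_(b <- S) ip b x * ip x b - ip x x| < e%:C -> sqnorm (x - proj_seq S x) < e.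
Proof.
move=> uS oS /(le_lt_trans (normc_ge_Re _)); rewrite ltcR; apply: le_lt_trans.
rewrite /sqnorm ip_residual // -normrN !ReB opprB.
by rewrite (eq_bigr (fun b => ip b x * ip x b)) ?ler_norm // => b _; rewrite mulrC.
Qed.

Lemma parseval_cross x y B : parseval x -> parseval y -> orthonormal_basis ip B ->
  has_sum B (fun b => ip x b * ip b y) (ip x y).
Proof.
move=> px py oB e e0.
have [S1 [S1B H1]] := px B oB e e0; have [S2 [S2B H2]] := py B oB e e0.
exists (S1 ++ S2); split=> [b|S uS SB SS]; first by rewrite mem_cat => /orP[/S1B|/S2B].
have oS : orthonormal [set` S] by apply: sub_orthonormal (onb_orthonormal oB).
have Nx : sqnorm (x - proj_seq S x) < e.
  by apply/sqnorm_residual_lt/H1 => // b bS1; apply: SS; rewrite mem_cat bS1.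
have Ny : sqnorm (y - proj_seq S y) < e.
  by apply/sqnorm_residual_lt/H2 => // b bS2; apply: SS; rewrite mem_cat bS2 orbT.
set z := ip (x - proj_seq S x) (y - proj_seq S y).
have z_small : Re (z * Num.conj z) < e ^+ 2.
  rewrite {2}/z -ipC; apply: le_lt_trans (cauchy_schwarz _ _) _.
  by rewrite expr2 ltr_pM ?sqnorm_ge0.
have -> : \sum_(b <- S) ip x b * ip b y - ip x y = - z by rewrite /z ip_residual // opprB.
rewrite normrN -(ltr_pXn2r (n := 2)) // ?nnegrE ?normr_ge0 ?lecR ?ltW //.
by rewrite normCK -mulJ_ReE -rmorphXn ltcR.
Qed.

Lemma parsevalD a x y : parseval x -> parseval y -> parseval (a *: x + y).
Proof.
move=> px py B oB.
have := has_sumD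
  (has_sumD (has_sumZ (a * Num.conj a) (px B oB))
            (has_sumZ (Num.conj a) (parseval_cross py px oB)))
  (has_sumD (has_sumZ a (parseval_cross px py oB)) (py B oB)).
have -> : ip (a *: x + y) (a *: x + y) =
    a * Num.conj a * ip x x + Num.conj a * ip y x + (a * ip x y + ip y y).
  by rewrite !ipDr !ipDl !ipZr !ipZl; ring.
by apply: eq_has_sum => b; rewrite !ipDr !ipDl !ipZr !ipZl; ring.
Qed.

Definition rank1 v : V -> V := fun u => ip u v *: v.

Definition pure_state v : V -> V := fun u => ((sqnorm v)^-1)%:C *: rank1 v u.

Lemma pure_state_unit e : ip e e = 1 -> pure_state e = rank1 e.
Proof. by move=> ee; apply: funext => u; rewrite /pure_state /sqnorm ee invr1 scale1r. Qed.

Lemma scale_pure_state v u : v != 0 -> (sqnorm v)%:C *: pure_state v u = rank1 v u.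
Proof.
by rewrite -sqnorm_gt0 => Nv; rewrite scalerA -rmorphM mulfV ?gt_eqF // scale1r.
Qed.

Lemma sqnorm_pure_state_le v x : sqnorm (pure_state v x) <= sqnorm x.
Proof.
have [->|] := eqVneq v 0.
  by rewrite /pure_state /rank1 !scaler0 /sqnorm ip0l sqnorm_ge0.
rewrite -sqnorm_gt0 => Nv; set c := (sqnorm v)^-1.
have -> : sqnorm (pure_state v x) = c ^+ 2 * sqnorm v * Re (ip x v * ip v x).
  rewrite /sqnorm /pure_state /rank1 !ipZl !ipZr conj_realC -ipC ip_sqnorm -Re_realMl.
  by congr Re; rewrite /c !rmorphM /=; ring.
apply: le_trans (ler_wpM2l _ (cauchy_schwarz x v)) _.
  by rewrite mulr_ge0 ?sqr_ge0 ?sqnorm_ge0.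
have cN : c * sqnorm v = 1 by rewrite mulVf ?gt_eqF.
rewrite [leLHS](_ : _ = (c * sqnorm v) ^+ 2 * sqnorm x); last ring.
by rewrite cN expr1n mul1r.
Qed.

Lemma density_pure_state v : v != 0 -> parseval v -> density ip (pure_state v).
Proof.
move=> v0 pv; have Nv : 0 < sqnorm v by rewrite sqnorm_gt0.
split.
- move=> a x y; rewrite /pure_state /rank1 ipDl ipZl scalerDl scalerDr !scalerA.
  by congr (_ *: _ + _); ring.
- by exists 1 => x; rewrite mul1r ler_sqrt ?sqnorm_ge0 ?sqnorm_pure_state_le.
- move=> x; rewrite /pure_state /rank1 !ipZl (ipC x v).
  by rewrite mulr_ge0 ?mul_conjC_ge0 // lecR invr_ge0 ltW.
- move=> B oB; have := has_sumZ ((sqnorm v)^-1)%:C (pv B oB).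
  rewrite ip_sqnorm -rmorphM mulVf ?gt_eqF //.
  by apply: eq_has_sum => b; rewrite /pure_state /rank1 !ipZl mulrA.
Qed.

Lemma parseval_unit_rank1 e : ip e e = 1 -> density ip (rank1 e) -> parseval e.
Proof.
move=> ee [_ _ _ tr] B oB; rewrite ee.
by apply: eq_has_sum (tr B oB) => b; rewrite /rank1 ipZl.
Qed.

Lemma density_diag_sum_le1 T S : density ip T -> uniq S -> orthonormal [set` S] ->
  Re (\sum_(b <- S) ip (T b) b) <= 1.
Proof.
case=> _ _ Tpos Ttr uS /orthonormal_extend[B oB SB].
exact: (partial_sum_le_has_sum (fun b _ => Tpos b) (Ttr B oB) uS (fun b => SB b)).
Qed.

Lemma density_neq0 T : density ip T -> exists x, T x != 0.
Proof.
move=> [_ _ _ Ttr]; apply: contrapT => T0.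
have {}T0 x : T x = 0 by apply: contrapT => /eqP Tx; apply: T0; exists x.
have [B oB _] : exists2 B, orthonormal_basis ip B & set0 `<=` B.
  by apply: orthonormal_extend => b c [].
have : has_sum B (fun=> 0) 1 by apply: eq_has_sum (Ttr B oB) => b; rewrite T0 ip0l.
by move/has_sum0/eqP; rewrite oner_eq0.
Qed.

Lemma is_linearZ T a x : is_linear T -> T (a *: x) = a *: T x.
Proof.
move=> Tlin; have T0 : T 0 = 0.
  have := Tlin 1 0 0; rewrite !scale1r addr0 => h.
  by apply: (addrI (T 0)); rewrite addr0 -h.
by rewrite -[a *: x]addr0 Tlin T0 addr0.
Qed.

Lemma projection_density_rank1 E : is_projection ip E -> density ip E ->
  exists2 e, ip e e = 1 & E = rank1 e.
Proof.
move=> [Eid Esa] dE; have [Elin _ _ _] := dE.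
have [x /exists_unit_multiple[a aa]] := density_neq0 dE.
set e := a *: E x in aa; have Ee : E e = e by rewrite is_linearZ // Eid.
exists e => //; apply: funext => u.
set w := E u - ip (E u) e *: e.
have [/eqP|/exists_unit_multiple[c cc]] := eqVneq w 0.
  by rewrite subr_eq0 => /eqP ->; rewrite /rank1 Esa Ee.
exfalso.
have Ew : E (c *: w) = c *: w.
  by rewrite is_linearZ // /w addrC -scaleNr Elin Ee Eid.
have we : ip (c *: w) e = 0 by rewrite ipZl /w ipBl ipZl aa mulr1 subrr mulr0.
have ew : e != c *: w by apply: contra_eq_neq we => <-; rewrite aa oner_neq0.
have oS : orthonormal [set` [:: e; c *: w]].
  apply: (@sub_orthonormal _ ([set e] `|` [set c *: w])).
    by move=> b /=; rewrite !inE => /orP[/eqP->|/eqP->]; [left|right].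
  by apply: orthonormal_setU1 => // [b b' -> ->|b ->]; rewrite ?eqxx.
have uS : uniq [:: e; c *: w] by rewrite /= inE andbT.
have := density_diag_sum_le1 dE uS oS.
by rewrite !big_cons big_nil Ee Ew aa cc /=; lra.
Qed.

Definition transition_prob e f : R := Re (ip f e * ip e f).

Lemma transition_probE e f : (transition_prob e f)%:C = ip f e * ip e f.
Proof. by rewrite /transition_prob (ipC f e) mulJ_ReE. Qed.

Lemma transition_prob_ge0 e f : 0 <= transition_prob e f.
Proof. by rewrite -lecR transition_probE (ipC f e) mul_conjC_ge0. Qed.

Lemma rank1_mixture e w al (lam q : R) u : al * Num.conj al = q%:C ->
  lam%:C *: rank1 (al *: e + w) u + rank1 (e - (lam%:C * Num.conj al) *: w) u =
  (lam * q + 1)%:C *: rank1 e u + (lam ^+ 2 * q + lam)%:C *: rank1 w u.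
Proof.
move=> alq; rewrite /rank1 ipBr !ipDr !ipZr rmorphM /= conj_realC conjCK.
rewrite !scalerDr !scalerN !scalerA addrACA -scalerDl -scaleNr -scalerDl.
congr (_ *: _ + _ *: _); rewrite !(rmorphD, rmorphM) /= ?rmorphXn /= -alq; ring.
Qed.

Lemma unit_neq0 e : ip e e = 1 -> e != 0.
Proof. by apply: contra_eq_neq => ->; rewrite ip0l eq_sym oner_neq0. Qed.

Definition vector_state e (rho : V -> V) : R := Re (ip (rho e) e).

Lemma vector_state_affine e : affine_on (density ip) (vector_state e).
Proof. by move=> x y t _ _ _; rewrite /vector_state /cvx ipDl !ipZl ReD !Re_realMl. Qed.

Lemma density_rank1_unit x : ip x x = 1 -> parseval x -> density ip (rank1 x).
Proof.
by move=> xx px; rewrite -pure_state_unit //; apply: density_pure_state; rewrite ?unit_neq0.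
Qed.

Section PureStatePair.
Variables e f : V.
Hypotheses (ee : ip e e = 1) (ff : ip f f = 1) (pe : parseval e) (pf : parseval f).

Lemma vector_state_range rho : density ip rho -> 0 <= vector_state e rho <= 1.
Proof.
move=> drho; have [_ _ rho_pos _] := drho.
move: (rho_pos e); rewrite lecE => /andP[_ ->] /=.
have oe : orthonormal [set` [:: e]].
  by move=> b c /=; rewrite !inE => /eqP-> /eqP->; rewrite ee eqxx.
by have := density_diag_sum_le1 drho (isT : uniq [:: e]) oe; rewrite big_seq1.
Qed.

Lemma ip_residual_unit :
  ip (f - ip f e *: e) (f - ip f e *: e) = (1 - transition_prob e f)%:C.
Proof.
rewrite !ipBl !ipBr !ipZl !ipZr ee ff rmorphB /= transition_probE (ipC f e); ring.
Qed.

Lemma transition_prob_le1 : transition_prob e f <= 1.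
Proof.
have := sqnorm_ge0 (f - ip f e *: e).
by rewrite /sqnorm ip_residual_unit subr_ge0.
Qed.

Lemma transition_prob_eq1 : transition_prob e f = 1 -> rank1 f = rank1 e.
Proof.
move=> q1; have : f - ip f e *: e == 0.
  by rewrite -sqnorm_eq0 /sqnorm ip_residual_unit q1 subrr.
rewrite subr_eq0 => /eqP fe; apply: funext => u.
rewrite /rank1 [in LHS]fe ipZr scalerA mulrAC -ipC [ip e f * _]mulrC.
by rewrite -transition_probE q1 mul1r.
Qed.

Section AffineLowerBound.
Variable g : (V -> V) -> R.
Hypotheses (g_affine : affine_on (density ip) g)
  (g_range : forall rho, density ip rho -> 0 <= g rho <= 1) (ge1 : g (rank1 e) = 1).

Lemma transition_prob_le_affine_approx (lam : R) :
  0 < lam -> transition_prob e f < 1 ->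
  transition_prob e f - lam * transition_prob e f * (1 - transition_prob e f)
    <= g (rank1 f).
Proof.
move=> lam0 q1; set q := transition_prob e f in q1 *.
set al := ip f e; set w := f - al *: e; set v := e - (lam%:C * Num.conj al) *: w.
have alq : al * Num.conj al = q%:C by rewrite transition_probE -ipC.
have Nw : sqnorm w = 1 - q by rewrite /sqnorm ip_residual_unit.
have we : ip w e = 0 by rewrite ipBl ipZl ee mulr1 subrr.
have Nv : sqnorm v = 1 + lam ^+ 2 * q * (1 - q).
  rewrite /sqnorm /v ipBl !ipBr !ipZl !ipZr ee ipC we ip_sqnorm Nw.
  rewrite rmorph0 !(mulr0, subr0) !rmorphM /= conj_realC conjCK.
  rewrite [X in Re X](_ : _ = (1 + lam ^+ 2 * q * (1 - q))%:C) //.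
  by rewrite !(rmorphB, rmorphD, rmorphM) ?rmorphXn rmorph1 /= -alq; ring.
have q0 : 0 <= q := transition_prob_ge0 e f.
have w0 : w != 0 by rewrite -sqnorm_gt0 Nw subr_gt0.
have D0 : 0 <= lam ^+ 2 * q * (1 - q).
  by rewrite -mulrA mulr_ge0 ?sqr_ge0 // mulr_ge0 // subr_ge0 ltW.
have v0 : v != 0 by rewrite -sqnorm_gt0 Nv; lra.
have pw : parseval w by rewrite /w addrC -scaleNr; apply: parsevalD.
have pv : parseval v by rewrite /v addrC -scaleNr; apply: parsevalD.
have mix u : lam%:C *: rank1 f u + (1 + lam ^+ 2 * q * (1 - q))%:C *: pure_state v u =
    (lam * q + 1)%:C *: rank1 e u + ((lam ^+ 2 * q + lam) * (1 - q))%:C *: pure_state w u.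
  rewrite -Nv scale_pure_state // rmorphM -scalerA -Nw scale_pure_state //.
  rewrite [in rank1 f u](_ : f = al *: e + w); first exact: rank1_mixture.
  by rewrite /w addrC subrK.
have lq1 : 0 <= 1 - q by rewrite subr_ge0 ltW.
have tc0 : 0 <= lam * q + 1 by rewrite addr_ge0 // mulr_ge0 // ltW.
have td0 : 0 <= (lam ^+ 2 * q + lam) * (1 - q).
  by rewrite mulr_ge0 // addr_ge0 ?(ltW lam0) // mulr_ge0 // sqr_ge0.
have := affine_mixture_le g_affine g_range (density_rank1_unit ff pf)
  (density_pure_state v0 pv) (density_rank1_unit ee pe) (density_pure_state w0 pw)
  ge1 lam0 (addr_ge0 ler01 D0) tc0 td0 _ mix.
have -> : lam * q + 1 - (1 + lam ^+ 2 * q * (1 - q)) = lam * (q - lam * q * (1 - q)).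
  by ring.
by rewrite ler_pM2l //; apply; ring.
Qed.

Lemma transition_prob_le_affine : transition_prob e f <= g (rank1 f).
Proof.
move: transition_prob_le1; rewrite le_eqVlt => /orP[/eqP q1|q1].
  by rewrite (transition_prob_eq1 q1) ge1 q1.
(* lam := eps suffices, as q (1 - q) <= 1 *)
apply/ler_addgt0Pr => eps eps0; have := transition_prob_le_affine_approx eps0 q1.
have := transition_prob_ge0 e f; set q := transition_prob e f => q0.
have : eps * q * (1 - q) <= eps.
  by rewrite -mulrA ler_piMr ?(ltW eps0) // mulr_ile1 ?subr_ge0 ?gerBl ?(ltW q1).
lra.
Qed.

End AffineLowerBound.

Lemma affine_ratio_rank1 :
  affine_ratio (density ip) (rank1 e) (rank1 f) = transition_prob e f.
Proof.
rewrite /affine_ratio; set A := (X in inf X).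
have Aq : A (transition_prob e f).
  exists (vector_state e); split; [exact: vector_state_affine|exact: vector_state_range| |].
  - by rewrite /vector_state /rank1 ipZl ee mulr1.
  - by rewrite /vector_state /rank1 ipZl mulrC.
have lbq : lbound A (transition_prob e f).
  by move=> _ [g [g_affine g_range ge1 ->]]; apply: transition_prob_le_affine.
apply/eqP; rewrite eq_le lb_le_inf ?andbT; [|by exists (transition_prob e f)|by []].
by apply: ge_inf Aq; exists (transition_prob e f).
Qed.

Lemma has_trace_rank1_comp : has_trace ip (rank1 e \o rank1 f) (transition_prob e f)%:C.
Proof.
move=> B oB; rewrite transition_probE.
apply: eq_has_sum (has_sumZ (ip f e) (parseval_cross pe pf oB)) => b.
by rewrite /rank1 /= !ipZl; ring.
Qed.

End PureStatePair.

End InnerProductSpace.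

Theorem lemma1 (R : realType) (V : lmodType R[i]) (ip : V -> V -> R[i])
  (HV : is_hilbert ip) (E F : V -> V) :
  is_projection ip E -> is_projection ip F ->
  extreme_point (density ip) E -> extreme_point (density ip) F ->
  has_trace ip (E \o F) (affine_ratio (density ip) E F)%:C.
Proof.
move=> prE prF [dE _] [dF _].
have [e ee EE] := projection_density_rank1 HV prE dE.
have [f ff FF] := projection_density_rank1 HV prF dF.
subst E F.
have pe := parseval_unit_rank1 HV ee dE; have pf := parseval_unit_rank1 HV ff dF.
rewrite affine_ratio_rank1 //; exact: has_trace_rank1_comp.
Qed.
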